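(* The map $\phi:\mathcal{H}_{WPP}\longrightarrow(\mathbf{WQSym},\sqcup\!\sqcup,\Delta)$, $P\mapsto \sum_{f\in Lin(P)} f$, is a Hopf algebra isomorphism.
   Context: A weak plane poset is a finite double poset $(P,\leq_1,\leq_2)$ such that (1) for all $x,y\in P$, ($x\leq_1 y$ and $x\leq_2 y$) implies $x=y$; (2) the relation $\preceq$ defined by ($x\leq_1 y$ or $x\leq_2 y$) is a total quasi-order (we write $x\equiv y$ when $x\preceq y$ and $y\preceq x$). The relation $\ll$ defined by ($y\leq_1 x$ or $x\leq_2 y$) is then a total order, so one may assume $(P,\ll)=([n],\leq)$. Weak plane posets are, up to isomorphism, in bijection with packed words $w$ of length $n$ via $P_w=([n],\leq_1,\leq_2)$ with $i\leq_1 j\iff(i\geq j$ and $w(i)\leq w(j))$, $i\leq_2 j\iff(i\leq j$ and $w(i)\leq w(j))$. $\mathcal{H}_{WPP}$ is the vector space spanned by isomorphism classes of weak plane posets, with product $PQ$ (disjoint union, $\leq_1$ and $\leq_2$ restricted to each part, and additionally $i\leq_2 j$ for all $i\in P$, $j\in Q$) and coproduct $\Delta(P)=\sum_{O} P_{\mid P\setminus O}\otimes P_{\mid O}$, summing over subsets $O$ that are upward closed for $\leq_1$; it is a graded connected Hopf algebra. A linear extension of a weak plane poset $P$ with $(P,\ll)=([n],\leq)$ is a surjection $f:[n]\to[k]$ (viewed as the packed word $f(1)\ldots f(n)$) such that $i\leq_1 j\Rightarrow f(i)\leq f(j)$ and $f(i)=f(j)\Rightarrow i\equiv j$; $Lin(P)$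 denotes the set of these. $\mathbf{WQSym}$ is the Hopf algebra of word quasi-symmetric functions with basis the packed words, $\sqcup\!\sqcup$ is its shifted shuffle product and $\Delta$ its usual coproduct; $(\mathbf{WQSym},\sqcup\!\sqcup,\Delta)$ is a Hopf algebra, and $\phi$ is a Hopf algebra morphism. On packed words of length $n$, define $f\leq g$ iff (a) for all $i,j$, ($i\geq j$ and $f(i)\leq f(j)$) implies $g(i)\leq g(j)$, and (b) $g(i)=g(j)$ implies $f(i)=f(j)$; this is an order and $\phi(P_f)=\sum_{f\leq g} g$. *)

From mathcomp Require Import all_boot all_order all_algebra.
Set Implicit Arguments. Unset Strict Implicit. Unset Printing Implicit Defensive.
Import GRing.Theory.
Local Open Scope ring_scope.

(* Weak plane posets, normalized so that (P, <<) = ([n], <=).          *)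
(* Elements of [n] are represented by 'I_n (i.e. 0..n-1, order kept).  *)

Definition rel2 (n : nat) := {ffun 'I_n -> {ffun 'I_n -> bool}}.
Definition rawpp (n : nat) := (rel2 n * rel2 n)%type.

Section WPPdef.
Variable n : nat.
Implicit Types p : rawpp n.

Definition partial_orderb (r : 'I_n -> 'I_n -> bool) : bool :=
  [&& [forall x, r x x],
      [forall x, forall y, (r x y && r y x) ==> (x == y)] &
      [forall x, forall y, forall z, (r x y && r y z) ==> r x z]].

Definition is_wpp p : bool :=
  let le1 := fun x y => p.1 x y in
  let le2 := fun x y => p.2 x y in
  let pre := fun x y => le1 x y || le2 x y in
  [&& partial_orderb le1, partial_orderb le2,
      [forall x, forall y, (le1 x y && le2 x y) ==> (x == y)],
      [forall x, forall y, pre x y || pre y x],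
      [forall x, forall y, forall z, (pre x y && pre y z) ==> pre x z] &
      (* normalization: the total order << is the natural order of [n] *)
      [forall x, forall y, (le1 y x || le2 x y) == (x <= y)%N]].
End WPPdef.

(* basis of the homogeneous component of degree n of H_WPP *)
Definition wpp (n : nat) := {p : rawpp n | is_wpp p}.

Definition le1 n (P : wpp n) (x y : 'I_n) : bool := (val P).1 x y.
Definition le2 n (P : wpp n) (x y : 'I_n) : bool := (val P).2 x y.
Definition preceq n (P : wpp n) (x y : 'I_n) : bool := le1 P x y || le2 P x y.
Definition equivP n (P : wpp n) (x y : 'I_n) : bool :=
  preceq P x y && preceq P y x.

(* a relation on 'I_k viewed as a relation on nat (false outside [0,k)) *)
Definition relN k (r : 'I_k -> 'I_k -> bool) (a b : nat) : bool :=
  match (insub a : option 'I_k), (insub b : option 'I_k) with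
  | Some x, Some y => r x y
  | _, _ => false
  end.

(* Product PQ: the relations of R : wpp (n+m) are those of the product *)
Definition mulH_coef n m (P : wpp n) (Q : wpp m) (R : wpp (n + m)) : bool :=
  [forall x : 'I_(n + m), forall y : 'I_(n + m),
     (le1 R x y ==
        if (x < n)%N && (y < n)%N then relN (le1 P) x y
        else if (n <= x)%N && (n <= y)%N then relN (le1 Q) (x - n) (y - n)
        else false)
  && (le2 R x y ==
        if (x < n)%N && (y < n)%N then relN (le2 P) x y
        else if (n <= x)%N && (n <= y)%N then relN (le2 Q) (x - n) (y - n)
        else (x < n)%N && (n <= y)%N)].

Definition posl n (S : {set 'I_n}) : seq nat :=
  [seq val x | x <- enum 'I_n & x \in S].

(* the restriction of r to S, relabelled increasingly by [#|S|], equals r' *)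
Definition restr_match n (r : 'I_n -> 'I_n -> bool) (S : {set 'I_n})
    k (r' : 'I_k -> 'I_k -> bool) : bool :=
  (#|S| == k) &&
  [forall a : 'I_k, forall b : 'I_k,
     r' a b == relN r (nth 0%N (posl S) a) (nth 0%N (posl S) b)].

Definition upclosed1 n (P : wpp n) (O : {set 'I_n}) : bool :=
  [forall x, forall y, ((x \in O) && le1 P x y) ==> (y \in O)].

(* coefficient of A (x) B in Delta(P) = sum_O P|_{P\O} (x) P|_O *)
Definition comulH_coef n i j (P : wpp n) (A : wpp i) (B : wpp j) : nat :=
  #|[set O : {set 'I_n} | [&& upclosed1 P O,
        restr_match (le1 P) (~: O) (le1 A), restr_match (le2 P) (~: O) (le2 A),
        restr_match (le1 P) O (le1 B) & restr_match (le2 P) O (le2 B)]]|.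

(* Packed words (values in {1,...,k}, all attained).                   *)

Definition rawpw (n : nat) := {ffun 'I_n -> 'I_n.+1}.
Definition rwseq n (f : rawpw n) : seq nat := [seq (f i : nat) | i <- enum 'I_n].
Definition maxw (s : seq nat) : nat := foldr maxn 0%N s.
Definition packedb n (f : rawpw n) : bool :=
  all (fun x => 0 < x)%N (rwseq f) &&
  all (fun v => v \in rwseq f) (iota 1 (maxw (rwseq f))).

(* basis of the homogeneous component of degree n of WQSym *)
Definition pw (n : nat) := {f : rawpw n | packedb f}.
Definition wseq n (w : pw n) : seq nat := rwseq (val w).
Definition wval n (w : pw n) (i : 'I_n) : nat := val w i.

Definition pack (s : seq nat) : seq nat :=
  [seq size (undup [seq y <- s | (y <= x)%N]) | x <- s].

Definition linext n (P : wpp n) (f : pw n) : bool :=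
  [forall i, forall j, le1 P i j ==> (wval f i <= wval f j)%N] &&
  [forall i, forall j, (wval f i == wval f j) ==> equivP P i j].

(* coefficient of w in the shifted shuffle u ⧢ v (shuffle of the associated
   set compositions, the blocks of v being shifted by n) *)
Definition shuf_coef n m (u : pw n) (v : pw m) (w : pw (n + m)) : bool :=
  let s := wseq w in
  [&& pack (take n s) == wseq u, pack (drop n s) == wseq v &
      all (fun x => x \notin drop n s) (take n s)].

(* coefficient of a (x) b in Delta(w) = sum_{k=0}^{max w} Pack(w|_{<=k}) (x) Pack(w|_{>k}) *)
Definition deconc_coef n i j (w : pw n) (a : pw i) (b : pw j) : nat :=
  let s := wseq w in
  count (fun k => (pack [seq x <- s | (x <= k)%N] == wseq a) &&
                  (pack [seq x <- s | (k < x)%N] == wseq b))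
        (iota 0 (maxw s).+1).

Section Maps.
Variable K : fieldType.

Definition HW n := {ffun wpp n -> K}.
Definition WQ n := {ffun pw n -> K}.

Definition phiK n (x : HW n) : WQ n :=
  [ffun w => \sum_(P : wpp n) x P * (nat_of_bool (linext P w))%:R].

Definition mulH n m (x : HW n) (y : HW m) : HW (n + m) :=
  [ffun R => \sum_(P : wpp n) \sum_(Q : wpp m)
               x P * y Q * (nat_of_bool (mulH_coef P Q R))%:R].

Definition mulW n m (x : WQ n) (y : WQ m) : WQ (n + m) :=
  [ffun w => \sum_(u : pw n) \sum_(v : pw m)
               x u * y v * (nat_of_bool (shuf_coef u v w))%:R].

Definition unitH : HW 0 := [ffun => 1].
Definition unitW : WQ 0 := [ffun => 1].

(* component of Delta in H_i (x) H_j, identified with functions on pairs of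
   basis elements *)
Definition comulH n i j (x : HW n) : {ffun (wpp i * wpp j) -> K} :=
  [ffun AB => \sum_(P : wpp n) x P * (comulH_coef P AB.1 AB.2)%:R].

Definition comulW n i j (x : WQ n) : {ffun (pw i * pw j) -> K} :=
  [ffun ab => \sum_(w : pw n) x w * (deconc_coef w ab.1 ab.2)%:R].

Definition phi2 i j (t : {ffun (wpp i * wpp j) -> K}) : {ffun (pw i * pw j) -> K} :=
  [ffun ab => \sum_(AB : wpp i * wpp j)
     t AB * (nat_of_bool (linext AB.1 ab.1) * nat_of_bool (linext AB.2 ab.2))%:R].

(* counits: coefficient of the empty basis element (degree 0 component) *)
Definition counitH (x : HW 0) : K := \sum_(P : wpp 0) x P.
Definition counitW (x : WQ 0) : K := \sum_(w : pw 0) x w.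
End Maps.

(** A weak plane poset on [n] is the same thing as a total preorder ≼ on [n]:
    [le1] and [le2] are ≼ intersected with ≥ and with ≤.  A packed word of
    length n is also a total preorder on its positions, so Lin(P) always
    contains the packed word w_P of ≼, and every other g ∈ Lin(P) has a
    strictly larger weight (inversions plus non-ties); φ is unitriangular,
    hence bijective.  The product PQ is the concatenation of the two
    preorders, whose linear extensions are the words whose halves pack to
    elements of Lin(P) and Lin(Q) and use disjoint letters, i.e. the shifted
    shuffle.  For the coproduct both sides count the upward closed sets O
    whose two restrictions admit the given linear extensions: a pair (w, k)
    of a w ∈ Lin(P) and a deconcatenation level k gives O = {x | k < w x}, and
    conversely O gives back w by putting the letters of P|_O above those of
    P|_{P∖O}. *)

From HB Require Import structures.
From mathcomp Require Import all_boot all_order all_algebra.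
Set Implicit Arguments. Unset Strict Implicit. Unset Printing Implicit Defensive.
Import GRing.Theory.

(** * Packing of words over nat *)

Definition pack_letter (s : seq nat) (x : nat) := size (undup [seq y <- s | y <= x]).

Lemma packE s : pack s = map (pack_letter s) s.
Proof. by []. Qed.

Lemma size_pack s : size (pack s) = size s.
Proof. by rewrite packE size_map. Qed.

Lemma nth_pack s i : i < size s -> nth 0 (pack s) i = pack_letter s (nth 0 s i).
Proof. by move=> lt_i; rewrite packE (nth_map 0). Qed.

Lemma pack_letter_mono s : {homo pack_letter s : x y / x <= y}.
Proof.
move=> x y le_xy; apply: uniq_leq_size; first exact: undup_uniq.
by move=> z; rewrite !mem_undup !mem_filter => /andP[le_zx ->]; rewrite (leq_trans le_zx).
Qed.

Lemma pack_letter_ltn s x y : y \in s -> x < y -> pack_letter s x < pack_letter s y.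
Proof.
move=> ys lt_xy; rewrite ltnNge; apply/negP => le_yx.
have sub : {subset undup [seq z <- s | z <= x] <= undup [seq z <- s | z <= y]}.
  move=> z; rewrite !mem_undup !mem_filter => /andP[le_zx ->].
  by rewrite (leq_trans le_zx (ltnW lt_xy)).
have [_ /(_ y)] := uniq_min_size (undup_uniq _) sub le_yx.
by rewrite !mem_undup !mem_filter leqnn ys leqNgt lt_xy.
Qed.

Lemma leq_pack_letter s x y : x \in s -> y \in s ->
  (pack_letter s x <= pack_letter s y) = (x <= y).
Proof.
move=> xs ys; case: (leqP x y) => [|lt_yx]; first exact: pack_letter_mono.
by apply/negbTE; rewrite -ltnNge pack_letter_ltn.
Qed.

Lemma pack_letter_gt0 s x : x \in s -> 0 < pack_letter s x.
Proof.
move=> xs; rewrite lt0n size_eq0; apply: contraTneq isT => /(congr1 (fun l => x \in l)).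
by rewrite mem_undup mem_filter leqnn xs.
Qed.

Lemma pack_letter_le_size s x : pack_letter s x <= size (undup s).
Proof.
apply: uniq_leq_size; first exact: undup_uniq.
by move=> z; rewrite !mem_undup mem_filter => /andP[].
Qed.

Lemma leq_nth_pack s i j : i < size s -> j < size s ->
  (nth 0 (pack s) i <= nth 0 (pack s) j) = (nth 0 s i <= nth 0 s j).
Proof. by move=> lt_i lt_j; rewrite !nth_pack // leq_pack_letter // mem_nth. Qed.

Lemma leq_maxw s x : x \in s -> x <= maxw s.
Proof.
elim: s => //= y s IHs; rewrite inE => /predU1P[->|/IHs le_x]; first exact: leq_maxl.
by rewrite (leq_trans le_x) ?leq_maxr.
Qed.

Lemma maxw_leP s m : all (fun x => x <= m) s -> maxw s <= m.
Proof. by elim: s => //= x s IHs /andP[le_x /IHs]; rewrite geq_max le_x. Qed.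

Lemma nth_le_maxw s k : nth 0 s k <= maxw s.
Proof. by case: (ltnP k (size s)) => [/(mem_nth 0)/leq_maxw | /(nth_default 0) ->]. Qed.

Definition packed (s : seq nat) :=
  all (fun x => 0 < x) s && all (fun v => v \in s) (iota 1 (maxw s)).

Lemma packed_pack s : packed (pack s).
Proof.
apply/andP; split.
  by apply/allP => x; rewrite packE => /mapP[y ys ->]; apply: pack_letter_gt0.
set V := undup s.
have uniq_V : uniq (map (pack_letter s) V).
  rewrite map_inj_in_uniq ?undup_uniq // => x y; rewrite !mem_undup => xs ys e.
  by apply/eqP; rewrite eqn_leq -(leq_pack_letter xs ys) -(leq_pack_letter ys xs) e leqnn.
have sub : {subset map (pack_letter s) V <= iota 1 (size V)}.
  move=> z /mapP[x]; rewrite mem_undup => xs ->.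
  by rewrite mem_iota pack_letter_gt0 //= add1n ltnS pack_letter_le_size.
have le_size : size (iota 1 (size V)) <= size (map (pack_letter s) V).
  by rewrite size_map size_iota.
have [_ eq_V] := uniq_min_size uniq_V sub le_size.
apply/allP => v; rewrite mem_iota => /andP[v_gt0 le_v].
have : v \in iota 1 (size V).
  rewrite mem_iota v_gt0 /= (leq_trans le_v) // add1n ltnS maxw_leP //.
  by apply/allP => z; rewrite packE => /mapP[y _ ->]; apply: pack_letter_le_size.
by rewrite -eq_V => /mapP[x]; rewrite mem_undup packE => xs ->; apply: map_f.
Qed.

Lemma pack_id s : packed s -> pack s = s.
Proof.
case/andP => /allP pos /allP attained; rewrite packE; apply: map_id_in => x xs.
rewrite /pack_letter -[RHS](size_iota 1); apply: perm_size; apply: uniq_perm.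
- exact: undup_uniq.
- exact: iota_uniq.
move=> z; rewrite mem_undup mem_filter mem_iota add1n ltnS.
apply/andP/andP => [[-> zs]|[z_gt0 le_zx]]; first by rewrite pos.
by rewrite le_zx attained // mem_iota z_gt0 add1n ltnS (leq_trans le_zx) ?leq_maxw.
Qed.

Lemma size_undup_map_in (h : nat -> nat) s : {in s &, injective h} ->
  size (undup (map h s)) = size (undup s).
Proof.
move=> inj_h; rewrite -[RHS](size_map h); apply: perm_size; apply: uniq_perm.
- exact: undup_uniq.
- by rewrite map_inj_in_uniq ?undup_uniq // => x y; rewrite !mem_undup; apply: inj_h.
move=> z; rewrite mem_undup; apply/mapP/mapP => -[y ys ->].
  by exists y; rewrite ?mem_undup.
by exists y; rewrite // -mem_undup.
Qed.

Lemma pack_map_mono (h : nat -> nat) s : {in s &, forall x y, (h x <= h y) = (x <= y)} ->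
  pack (map h s) = pack s.
Proof.
move=> mono_h; rewrite !packE -map_comp; apply/eq_in_map => x xs /=.
rewrite /pack_letter filter_map.
have -> : [seq y <- s | h y <= h x] = [seq y <- s | y <= x].
  by apply: eq_in_filter => y ys; rewrite mono_h.
apply: size_undup_map_in => y z; rewrite !mem_filter => /andP[_ ys] /andP[_ zs] e.
by apply/eqP; rewrite eqn_leq -(mono_h y z) // -(mono_h z y) // e leqnn.
Qed.

Lemma eq_pack s t : size s = size t ->
  (forall i j, i < size s -> j < size s ->
     (nth 0 s i <= nth 0 s j) = (nth 0 t i <= nth 0 t j)) ->
  pack s = pack t.
Proof.
move=> eq_size eq_ord; pose h x := nth 0 t (index x s).
have h_nth i : i < size s -> h (nth 0 s i) = nth 0 t i.
  move=> lt_i; apply/eqP; rewrite eqn_leq -!eq_ord ?index_mem ?mem_nth //.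
  by rewrite nth_index ?mem_nth ?leqnn.
have map_h : map h s = t.
  apply: (@eq_from_nth _ 0); first by rewrite size_map eq_size.
  by move=> i; rewrite size_map => lt_i; rewrite (nth_map 0) // h_nth.
rewrite -map_h pack_map_mono // => _ _ /(nthP 0)[i lt_i <-] /(nthP 0)[j lt_j <-].
by rewrite !h_nth // eq_ord.
Qed.

(** * Packed words *)

Section PackedWords.
Variable n : nat.
Implicit Types u v w : pw n.

Lemma size_wseq w : size (wseq w) = n.
Proof. by rewrite size_map size_enum_ord. Qed.

Lemma nth_wseq w (i : 'I_n) : nth 0 (wseq w) i = wval w i.
Proof. by rewrite (nth_map i) ?size_enum_ord // nth_ord_enum. Qed.

Lemma wval_in_wseq w i : wval w i \in wseq w.
Proof. by rewrite -nth_wseq mem_nth // size_wseq. Qed.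

Lemma packed_wseq w : packed (wseq w).
Proof. exact: (valP w). Qed.

Lemma pack_wseq w : pack (wseq w) = wseq w.
Proof. exact/pack_id/packed_wseq. Qed.

Lemma wseq_inj : injective (@wseq n).
Proof.
move=> u v eq_uv; apply/val_inj/ffunP => i; apply: val_inj.
by rewrite -[LHS]nth_wseq eq_uv nth_wseq.
Qed.

Lemma wval_gt0 w i : 0 < wval w i.
Proof. by case/andP: (packed_wseq w) => /allP -> //; apply: wval_in_wseq. Qed.

Lemma wval_le_maxw w i : wval w i <= maxw (wseq w).
Proof. exact/leq_maxw/wval_in_wseq. Qed.

Lemma maxw_wseq_le w : maxw (wseq w) <= n.
Proof.
apply/maxw_leP/allP => x /(nthP 0)[i]; rewrite size_wseq => lt_i <-.
by rewrite (nth_wseq w (Ordinal lt_i)) -ltnS ltn_ord.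
Qed.

Lemma wval_onto w k : 0 < k -> k <= maxw (wseq w) -> exists i, wval w i = k.
Proof.
move=> k_gt0 le_k; case/andP: (packed_wseq w) => _ /allP attained.
have /(nthP 0)[i] : k \in wseq w by rewrite attained // mem_iota k_gt0 add1n ltnS.
by rewrite size_wseq => lt_i <-; exists (Ordinal lt_i); rewrite -nth_wseq.
Qed.

Lemma pack_pw (s : seq nat) : size s = n -> {u : pw n | wseq u = pack s}.
Proof.
move=> size_s; pose f : rawpw n := [ffun i : 'I_n => inord (nth 0 (pack s) i)].
have wseq_f : rwseq f = pack s.
  apply: (@eq_from_nth _ 0); first by rewrite size_map size_enum_ord size_pack.
  move=> i; rewrite size_map size_enum_ord => lt_i.
  rewrite (nth_map (Ordinal lt_i)) ?size_enum_ord // ffunE.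
  rewrite (_ : nth _ _ i = Ordinal lt_i); last by apply: val_inj; rewrite /= nth_enum_ord.
  rewrite inordK //= ltnS nth_pack ?size_s //.
  by rewrite (leq_trans (pack_letter_le_size _ _)) // -size_s size_undup.
have packed_f : packedb f by rewrite /packedb wseq_f; apply: packed_pack.
by exists (exist _ f packed_f); rewrite /wseq /= wseq_f.
Qed.

Lemma pw_order_inj u v :
  (forall i j, (wval u i <= wval u j) = (wval v i <= wval v j)) -> u = v.
Proof.
move=> eq_ord; apply: wseq_inj; rewrite -pack_wseq -(pack_wseq v).
apply: eq_pack => [|i j]; rewrite ?size_wseq // => lt_i lt_j.
by have := eq_ord (Ordinal lt_i) (Ordinal lt_j); rewrite -!nth_wseq.
Qed.

Lemma size_letters (f : 'I_n -> nat) : size [seq f i | i <- enum 'I_n] = n.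
Proof. by rewrite size_map size_enum_ord. Qed.

Definition word_of_letters f : pw n := sval (pack_pw (size_letters f)).

Lemma leq_word_of_letters f i j :
  (wval (word_of_letters f) i <= wval (word_of_letters f) j) = (f i <= f j).
Proof.
have nth_f (k : 'I_n) : nth 0 [seq f i | i <- enum 'I_n] k = f k.
  by rewrite (nth_map k) ?size_enum_ord // nth_ord_enum.
rewrite -!nth_wseq -!nth_f /word_of_letters; case: pack_pw => u /= ->.
by rewrite leq_nth_pack ?size_letters.
Qed.

End PackedWords.

Lemma leq_wval_pack l (c : pw l) s : wseq c = pack s -> forall i j : 'I_l,
  (wval c i <= wval c j) = (nth 0 s i <= nth 0 s j).
Proof.
move=> c_pack i j; have size_s : size s = l by rewrite -size_pack -c_pack size_wseq.
by rewrite -!nth_wseq c_pack leq_nth_pack ?size_s.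
Qed.

Lemma eq_wval_pack l (c : pw l) s : wseq c = pack s -> forall i j : 'I_l,
  (wval c i == wval c j) = (nth 0 s i == nth 0 s j).
Proof. by move=> c_pack i j; rewrite !eqn_leq !(leq_wval_pack c_pack). Qed.

Lemma pack_eq_wseq l (t : seq nat) (c : pw l) : size t = l ->
  (pack t == wseq c) =
  [forall p : 'I_l, forall q : 'I_l, (wval c p <= wval c q) == (nth 0 t p <= nth 0 t q)].
Proof.
move=> size_t; apply/eqP/'forall_'forall_eqP => [c_pack p q|eq_ord].
  by rewrite (leq_wval_pack (esym c_pack)).
rewrite -(pack_wseq c); apply: eq_pack => [|x y]; rewrite ?size_wseq ?size_t // => lt_x lt_y.
by have := eq_ord (Ordinal lt_x) (Ordinal lt_y); rewrite -!nth_wseq /= => <-.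
Qed.

(** * Weak plane posets as total preorders *)

Definition total_preorder T (r : rel T) := [/\ reflexive r, transitive r & total r].

Lemma partial_orderbP n (r : rel 'I_n) :
  reflect [/\ reflexive r, antisymmetric r & transitive r] (partial_orderb r).
Proof.
apply: (iffP and3P) => [[/forallP r_refl /'forall_'forall_implyP r_anti]|].
  move/'forall_'forall_'forall_implyP => r_trans.
  split=> // [x y /r_anti /eqP // | y x z rxy ryz].
  by apply: (r_trans x y z); rewrite rxy.
case=> r_refl r_anti r_trans; split.
- exact/forallP.
- by apply/'forall_'forall_implyP => x y /r_anti ->.
- by apply/'forall_'forall_'forall_implyP => x y z /andP[]; apply: r_trans.
Qed.

Section WeakPlanePoset.
Variables (n : nat) (P : wpp n).

Let is_wpp_P := valP P.

Lemma le1_refl : reflexive (le1 P).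
Proof. by case/and5P: is_wpp_P => /partial_orderbP[]. Qed.

Lemma le2_refl : reflexive (le2 P).
Proof. by case/and5P: is_wpp_P => _ /partial_orderbP[]. Qed.

Lemma preceq_total : total (preceq P).
Proof. by case/and5P: is_wpp_P => _ _ _ /'forall_forallP. Qed.

Lemma preceq_trans : transitive (preceq P).
Proof.
case/and5P: is_wpp_P => _ _ _ _ /andP[/'forall_'forall_'forall_implyP tr _] y x z pxy pyz.
by apply: (tr x y z); apply/andP.
Qed.

Lemma preceq_refl : reflexive (preceq P).
Proof. by move=> x; rewrite /preceq le1_refl. Qed.

Lemma preceq_total_preorder : total_preorder (preceq P).
Proof. by split; [apply: preceq_refl | apply: preceq_trans | apply: preceq_total]. Qed.

Lemma le1_or_le2 x y : (le1 P y x || le2 P x y) = (x <= y).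
Proof. by case/and5P: is_wpp_P => _ _ _ _ /andP[_ /'forall_'forall_eqP norm]; apply: norm. Qed.

Lemma le1E x y : le1 P x y = (y <= x) && preceq P x y.
Proof.
apply/idP/andP => [le1xy | [le_yx /orP[//| le2xy]]].
  by rewrite -le1_or_le2 le1xy /preceq le1xy.
have /val_inj -> : val x = val y by apply/anti_leq; rewrite le_yx -le1_or_le2 le2xy orbT.
exact: le1_refl.
Qed.

Lemma le2E x y : le2 P x y = (x <= y) && preceq P x y.
Proof.
apply/idP/andP => [le2xy | [le_xy /orP[le1xy | //]]].
  by rewrite -le1_or_le2 le2xy orbT /preceq le2xy orbT.
have /val_inj -> : val x = val y by apply/anti_leq; rewrite le_xy -le1_or_le2 le1xy.
exact: le2_refl.
Qed.

End WeakPlanePoset.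

Lemma wpp_preceq_inj n (P Q : wpp n) : preceq P =2 preceq Q -> P = Q.
Proof.
move=> eq_PQ; apply: val_inj.
rewrite [val P]surjective_pairing [val Q]surjective_pairing; congr pair;
  apply/ffunP => x; apply/ffunP => y.
- by have := le1E P x y; rewrite eq_PQ -le1E.
- by have := le2E P x y; rewrite eq_PQ -le2E.
Qed.

Section WppOfPreorder.
Variables (n : nat) (T : rel 'I_n).
Hypothesis T_preorder : total_preorder T.

Definition raw_of_preorder : rawpp n :=
  ([ffun x : 'I_n => [ffun y : 'I_n => (y <= x) && T x y]],
   [ffun x : 'I_n => [ffun y : 'I_n => (x <= y) && T x y]]).

Lemma is_wpp_of_preorder : is_wpp raw_of_preorder.
Proof.
case: T_preorder => T_refl T_trans T_total.
have le1E x y : raw_of_preorder.1 x y = (y <= x) && T x y by rewrite !ffunE.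
have le2E x y : raw_of_preorder.2 x y = (x <= y) && T x y by rewrite !ffunE.
have preE x y : raw_of_preorder.1 x y || raw_of_preorder.2 x y = T x y.
  by rewrite le1E le2E -andb_orl; case: leqP => //= /ltnW ->.
have anti (x y : 'I_n) : y <= x -> x <= y -> x = y.
  by move=> le_yx le_xy; apply/val_inj/anti_leq; rewrite le_xy.
apply/and5P; split.
- apply/partial_orderbP; split=> [x | x y | y x z]; rewrite !le1E ?leqnn ?T_refl //.
    by case/andP=> /andP[le_yx _] /andP[le_xy _]; apply: anti.
  by case/andP=> le_yx Txy /andP[le_zy Tyz]; rewrite (leq_trans le_zy) //= (T_trans y).
- apply/partial_orderbP; split=> [x | x y | y x z]; rewrite !le2E ?leqnn ?T_refl //.
    by case/andP=> /andP[le_xy _] /andP[le_yx _]; apply: anti.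
  by case/andP=> le_xy Txy /andP[le_yz Tyz]; rewrite (leq_trans le_xy) //= (T_trans y).
- apply/'forall_'forall_implyP => x y; rewrite le1E le2E.
  by case/andP=> /andP[le_yx _] /andP[le_xy _]; rewrite (anti x y).
- by apply/'forall_forallP => x y; rewrite !preE.
apply/andP; split.
  by apply/'forall_'forall_'forall_implyP => x y z; rewrite !preE => /andP[]; apply: T_trans.
by apply/'forall_'forall_eqP => x y; rewrite le1E le2E -andb_orr orbC T_total andbT.
Qed.

Definition wpp_of_preorder : wpp n := exist _ raw_of_preorder is_wpp_of_preorder.

Lemma preceq_of_preorder : preceq wpp_of_preorder =2 T.
Proof.
move=> x y; rewrite /preceq /le1 /le2 /= !ffunE -andb_orl.
by case: leqP => //= /ltnW ->.
Qed.

Lemma le1_of_preorder x y : le1 wpp_of_preorder x y = (y <= x) && T x y.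
Proof. by rewrite le1E preceq_of_preorder. Qed.

Lemma le2_of_preorder x y : le2 wpp_of_preorder x y = (x <= y) && T x y.
Proof. by rewrite le2E preceq_of_preorder. Qed.

Lemma equivP_of_preorder x y : equivP wpp_of_preorder x y = T x y && T y x.
Proof. by rewrite /equivP !preceq_of_preorder. Qed.

End WppOfPreorder.

Lemma linextP n (P : wpp n) (g : pw n) :
  reflect ((forall i j, le1 P i j -> wval g i <= wval g j) /\
           (forall i j, wval g i = wval g j -> equivP P i j)) (linext P g).
Proof.
apply: (iffP andP) => [[/'forall_'forall_implyP le1_mono /'forall_'forall_implyP eq_equiv]|].
  by split=> // i j /eqP; apply: eq_equiv.
case=> le1_mono eq_equiv; split; first exact/'forall_'forall_implyP.
by apply/'forall_'forall_implyP => i j /eqP; apply: eq_equiv.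
Qed.

Section WordOfWpp.
Variable n : nat.

Lemma leq_card_downset (T : rel 'I_n) : total_preorder T -> forall i j,
  (#|[set k | T k i]| <= #|[set k | T k j]|) = T i j.
Proof.
case=> T_refl T_trans T_total i j; case Tij: (T i j).
  by apply/subset_leq_card/subsetP => k; rewrite !inE => Tki; apply: T_trans Tij.
apply/negbTE; rewrite -ltnNge; apply/proper_card/properP; split.
  apply/subsetP => k; rewrite !inE => Tkj; apply: T_trans Tkj _.
  by move: (T_total i j); rewrite Tij.
by exists i; rewrite !inE ?T_refl ?Tij.
Qed.

Definition word_of_preorder (T : rel 'I_n) := word_of_letters (fun i => #|[set k | T k i]|).

Lemma leq_word_of_preorder T : total_preorder T -> forall i j,
  (wval (word_of_preorder T) i <= wval (word_of_preorder T) j) = T i j.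
Proof. by move=> T_preorder i j; rewrite leq_word_of_letters leq_card_downset. Qed.

Definition word_of_wpp (P : wpp n) := word_of_preorder (preceq P).

Lemma leq_word_of_wpp P i j :
  (wval (word_of_wpp P) i <= wval (word_of_wpp P) j) = preceq P i j.
Proof. exact/leq_word_of_preorder/preceq_total_preorder. Qed.

Lemma wval_total_preorder (g : pw n) : total_preorder (fun i j => wval g i <= wval g j).
Proof. by split=> [x | y x z | x y]; [apply: leqnn | apply: leq_trans | apply: leq_total]. Qed.

Definition wpp_of_word g := wpp_of_preorder (wval_total_preorder g).

Lemma word_of_wppK : cancel word_of_wpp wpp_of_word.
Proof.
by move=> P; apply: wpp_preceq_inj => i j; rewrite preceq_of_preorder leq_word_of_wpp.
Qed.

Lemma wpp_of_wordK : cancel wpp_of_word word_of_wpp.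
Proof.
by move=> g; apply: pw_order_inj => i j; rewrite leq_word_of_wpp preceq_of_preorder.
Qed.

Lemma card_wpp : #|{: wpp n}| = #|{: pw n}|.
Proof.
apply: (bij_eq_card (f := word_of_wpp)).
by exists wpp_of_word; [apply: word_of_wppK | apply: wpp_of_wordK].
Qed.

Lemma linext_word_of_wpp P : linext P (word_of_wpp P).
Proof.
apply/linextP; split=> i j; first by rewrite le1E leq_word_of_wpp => /andP[].
by move=> eq_ij; rewrite /equivP -!leq_word_of_wpp eq_ij leqnn.
Qed.

End WordOfWpp.

(** * φ is bijective *)

Definition cmp_weight (x y : nat) := (y < x) + (x != y).

Section Weight.
Variable n : nat.

Definition pair_weight (g : pw n) (p : 'I_n * 'I_n) :=
  if p.1 < p.2 then cmp_weight (wval g p.1) (wval g p.2) else 0.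

Definition word_weight g := \sum_p pair_weight g p.

Lemma pair_weight_inj (u v : pw n) : pair_weight u =1 pair_weight v -> u = v.
Proof.
have leqE x y : (x <= y) = (cmp_weight x y != 2) by rewrite /cmp_weight; case: ltngtP.
have geqE x y : (y <= x) = (cmp_weight x y != 1) by rewrite /cmp_weight; case: ltngtP.
move=> eq_uv; apply: pw_order_inj => i j; case: (ltngtP i j) => [lt_ij | lt_ji | /val_inj ->].
- by have := eq_uv (i, j); rewrite /pair_weight /= lt_ij !leqE => ->.
- by have := eq_uv (j, i); rewrite /pair_weight /= lt_ji !geqE => ->.
- by rewrite !leqnn.
Qed.

Lemma leq_pair_weight_linext P g p :
  linext P g -> pair_weight (word_of_wpp P) p <= pair_weight g p.
Proof.
case/linextP => le1_mono eq_equiv; case: p => i j; rewrite /pair_weight /=.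
case: ltnP => // lt_ij.
have neq_g : ~~ preceq P i j || ~~ preceq P j i -> wval g i != wval g j.
  by move=> not_equiv; apply: contraTneq not_equiv => /eq_equiv /andP[-> ->].
rewrite /cmp_weight.
case: (ltngtP (wval (word_of_wpp P) i) (wval (word_of_wpp P) j)) => [w_ij | w_ji | //].
  have ne_g : wval g i != wval g j.
    by apply: neq_g; rewrite -!leq_word_of_wpp -!ltnNge w_ij orbT.
  by rewrite ne_g; case: (_ < _).
have ne_g : wval g i != wval g j.
  by apply: neq_g; rewrite -!leq_word_of_wpp -!ltnNge w_ji.
have le_g : wval g j <= wval g i.
  by apply: le1_mono; rewrite le1E (ltnW lt_ij) -leq_word_of_wpp ltnW.
by rewrite ltn_neqAle eq_sym ne_g le_g.
Qed.

Lemma ltn_sum (I : finType) (F G : I -> nat) k :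
  (forall i, F i <= G i) -> F k < G k -> \sum_i F i < \sum_i G i.
Proof.
move=> le_FG lt_k; rewrite (bigD1 k) //= [ltnRHS](bigD1 k) //=.
by rewrite -addSn leq_add // leq_sum.
Qed.

Lemma ltn_word_weight_linext P g :
  linext P g -> g != word_of_wpp P -> word_weight (word_of_wpp P) < word_weight g.
Proof.
move=> lin_g neq_g; have [p neq_p] : exists p, pair_weight (word_of_wpp P) p != pair_weight g p.
  apply/existsP; apply: contraR neq_g; rewrite negb_exists => /forallP eq_w.
  by apply/eqP/pair_weight_inj => p; have /negPn/eqP -> := eq_w p.
apply: (ltn_sum (k := p)) => [q|]; first exact: leq_pair_weight_linext.
by rewrite ltn_neqAle neq_p leq_pair_weight_linext.
Qed.

End Weight.

Section LinearBijection.
Variables (K : fieldType) (I J : finType).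
Local Open Scope ring_scope.

Lemma linear_bij (f : {ffun I -> K^o} -> {ffun J -> K^o}) :
  linear f -> (forall u, f u = 0 -> u = 0) -> #|I| = #|J| -> bijective f.
Proof.
move=> lin_f ker_f card_IJ.
pose F : {linear _ -> _} := HB.pack f (GRing.isLinear.Build K _ _ *:%R f lin_f).
pose h := linfun F; have hE u : h u = f u by rewrite lfunE.
have ker_h : lker h == 0%VS.
  apply/lker0P => u v; rewrite !hE => eq_uv; apply/eqP; rewrite -subr_eq0; apply/eqP/ker_f.
  by rewrite -[f]/(F : _ -> _) linearB /= eq_uv subrr.
have img_h : limg h = fullv.
  apply/eqP; rewrite eqEdim subvf /=.
  have := limg_ker_dim h fullv; rewrite (eqP ker_h) capv0 dimv0 add0n => ->.
  by rewrite !dimvf /dim /= card_IJ.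
exists (h^-1)%VF => u; first by rewrite -hE lker0_lfunK.
by rewrite -hE limg_lfunVK // img_h memvf.
Qed.

End LinearBijection.

Section PhiBijective.
Variables (K : fieldType) (n : nat).
Local Open Scope ring_scope.

Lemma phiK_linear : linear (@phiK K n : {ffun _ -> K^o} -> {ffun _ -> K^o}).
Proof.
move=> a u v; apply/ffunP => w; rewrite !ffunE scaler_sumr -big_split /=.
by apply: eq_bigr => P _; rewrite !ffunE mulrDl scalerAl.
Qed.

(* For P of minimal weight in the support of x, w_P occurs in φ(x) only through P. *)
Lemma phiK_eq0 (x : HW K n) : phiK x = 0 -> x = 0.
Proof.
move=> phi_x0; apply/ffunP => P; rewrite ffunE; apply/eqP/contraT => nzP.
have [Q nzQ minQ] :=
  @arg_minnP _ P (fun Q => x Q != 0) (fun Q => word_weight (word_of_wpp Q)) nzP.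
move/ffunP/(_ (word_of_wpp Q)): phi_x0; rewrite !ffunE (bigD1 Q) //= big1.
  by rewrite linext_word_of_wpp mulr1 addr0 => /eqP; rewrite (negbTE nzQ).
move=> R neq_RQ; have [->|nzR] := eqVneq (x R) 0; first by rewrite mul0r.
case lin_R: (linext R (word_of_wpp Q)); last by rewrite mulr0.
have neq_w : word_of_wpp Q != word_of_wpp R.
  by apply: contra neq_RQ => /eqP/(can_inj (@word_of_wppK n)) ->.
by have := leq_ltn_trans (minQ R nzR) (ltn_word_weight_linext lin_R neq_w); rewrite ltnn.
Qed.

Lemma phiK_bij : bijective (@phiK K n).
Proof.
have := linear_bij phiK_linear; apply.
- by move=> u; apply: phiK_eq0.
- exact: card_wpp.
Qed.

End PhiBijective.

(** * φ is multiplicative *)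

Lemma relN_ord k (r : rel 'I_k) (i j : 'I_k) : relN r i j = r i j.
Proof. by rewrite /relN !valK. Qed.

Section Halves.
Variables (n m : nat) (w : pw (n + m)).

Lemma size_take_wseq : size (take n (wseq w)) = n.
Proof. by rewrite size_takel // size_wseq leq_addr. Qed.

Lemma size_drop_wseq : size (drop n (wseq w)) = m.
Proof. by rewrite size_drop size_wseq addKn. Qed.

Lemma nth_take_wseq (a : 'I_n) : nth 0 (take n (wseq w)) a = wval w (lshift m a).
Proof. by rewrite nth_take // (nth_wseq w (lshift m a)). Qed.

Lemma nth_drop_wseq (b : 'I_m) : nth 0 (drop n (wseq w)) b = wval w (rshift n b).
Proof. by rewrite nth_drop (nth_wseq w (rshift n b)). Qed.

Lemma disjoint_halvesE :
  all (fun x => x \notin drop n (wseq w)) (take n (wseq w)) =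
  [forall a, forall b, wval w (lshift m a) != wval w (rshift n b)].
Proof.
apply/allP/'forall_forallP => [disj a b | disj x /(nthP 0)[i lt_i <-]].
  apply: contraTneq (disj _ (mem_nth 0 _ : nth 0 _ a \in _)) => [eq_ab|].
    by rewrite nth_take_wseq eq_ab -nth_drop_wseq negbK mem_nth ?size_drop_wseq.
  by rewrite size_take_wseq.
apply/negP => /(nthP 0)[j lt_j eq_ij].
rewrite size_take_wseq in lt_i; rewrite size_drop_wseq in lt_j.
have := disj (Ordinal lt_i) (Ordinal lt_j).
by rewrite -nth_take_wseq -nth_drop_wseq /= eq_ij eqxx.
Qed.

End Halves.

Section Product.
Variables (n m : nat) (P : wpp n) (Q : wpp m).

Definition cat_preorder (x y : 'I_(n + m)) :=
  match split x, split y with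
  | inl a, inl b => preceq P a b
  | inr a, inr b => preceq Q a b
  | inl _, inr _ => true
  | inr _, inl _ => false
  end.

Lemma cat_preorder_ll a b : cat_preorder (lshift m a) (lshift m b) = preceq P a b.
Proof. by rewrite /cat_preorder !(unsplitK (inl _ _)). Qed.

Lemma cat_preorder_rr a b : cat_preorder (rshift n a) (rshift n b) = preceq Q a b.
Proof. by rewrite /cat_preorder !(unsplitK (inr _ _)). Qed.

Lemma cat_preorder_lr a b : cat_preorder (lshift m a) (rshift n b).
Proof. by rewrite /cat_preorder (unsplitK (inl _ _)) (unsplitK (inr _ _)). Qed.

Lemma cat_preorder_rl a b : cat_preorder (rshift n a) (lshift m b) = false.
Proof. by rewrite /cat_preorder (unsplitK (inl _ _)) (unsplitK (inr _ _)). Qed.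

Definition cat_preorderE :=
  (cat_preorder_ll, cat_preorder_rr, cat_preorder_lr, cat_preorder_rl).

Lemma cat_total_preorder : total_preorder cat_preorder.
Proof.
split.
- by move=> x; case: (split_ordP x) => a ->; rewrite cat_preorderE preceq_refl.
- move=> y x z; case: (split_ordP x) => a ->; case: (split_ordP y) => b ->;
    case: (split_ordP z) => c ->; rewrite ?cat_preorderE //; apply: preceq_trans.
- by move=> x y; case: (split_ordP x) => a ->; case: (split_ordP y) => b ->;
    rewrite ?cat_preorderE ?preceq_total.
Qed.

Definition wpp_mul := wpp_of_preorder cat_total_preorder.

Lemma mulH_coef_wpp_mul : mulH_coef P Q wpp_mul.
Proof.
have n_le_ord (a : 'I_n) k : (n + k <= a) = false by rewrite leqNgt ltn_addr.
have ord_le_n (a : 'I_n) k : a <= n + k by rewrite ltnW ?ltn_addr.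
have n_leq_ord (a : 'I_n) : (n <= a) = false by rewrite leqNgt ltn_ord.
apply/'forall_forallP => x y; rewrite le1_of_preorder le2_of_preorder.
by case: (split_ordP x) => a ->; case: (split_ordP y) => b ->;
  rewrite cat_preorderE /= ?addKn ?leq_add2l ?leq_addr ?n_le_ord ?ord_le_n ?n_leq_ord
          ?andbF ?relN_ord -?le1E -?le2E ?eqxx.
Qed.

Lemma mulH_coef_uniq R R' : mulH_coef P Q R -> mulH_coef P Q R' -> R = R'.
Proof.
move=> /'forall_forallP coefR /'forall_forallP coefR'; apply: wpp_preceq_inj => x y.
case/andP: (coefR x y) => /eqP le1R /eqP le2R; case/andP: (coefR' x y) => /eqP le1R' /eqP le2R'.
by rewrite /preceq le1R le2R le1R' le2R'.
Qed.

Section LinextProduct.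
Variables (w : pw (n + m)) (u : pw n) (v : pw m).
Hypotheses (u_pack : wseq u = pack (take n (wseq w)))
           (v_pack : wseq v = pack (drop n (wseq w))).

Let leq_u a b : (wval u a <= wval u b) = (wval w (lshift m a) <= wval w (lshift m b)).
Proof. by rewrite (leq_wval_pack u_pack) !nth_take_wseq. Qed.

Let eq_u a b : (wval u a == wval u b) = (wval w (lshift m a) == wval w (lshift m b)).
Proof. by rewrite (eq_wval_pack u_pack) !nth_take_wseq. Qed.

Let leq_v a b : (wval v a <= wval v b) = (wval w (rshift n a) <= wval w (rshift n b)).
Proof. by rewrite (leq_wval_pack v_pack) !nth_drop_wseq. Qed.

Let eq_v a b : (wval v a == wval v b) = (wval w (rshift n a) == wval w (rshift n b)).
Proof. by rewrite (eq_wval_pack v_pack) !nth_drop_wseq. Qed.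

Lemma linext_wpp_mul_halves : linext wpp_mul w ->
  [/\ linext P u, linext Q v &
      forall a b, wval w (lshift m a) != wval w (rshift n b)].
Proof.
case/linextP => le1_mono eq_equiv; split.
- apply/linextP; split=> a b.
    rewrite le1E leq_u => le1ab; apply: le1_mono.
    by rewrite le1_of_preorder cat_preorderE.
  by move/eqP; rewrite eq_u => /eqP/eq_equiv; rewrite equivP_of_preorder !cat_preorderE.
- apply/linextP; split=> a b.
    rewrite le1E leq_v => le1ab; apply: le1_mono.
    by rewrite le1_of_preorder cat_preorderE /= leq_add2l.
  by move/eqP; rewrite eq_v => /eqP/eq_equiv; rewrite equivP_of_preorder !cat_preorderE.
- by move=> a b; apply/negP => /eqP/eq_equiv; rewrite equivP_of_preorder !cat_preorderE.
Qed.

Lemma linext_wpp_mul_of_halves : linext P u -> linext Q v ->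
  (forall a b, wval w (lshift m a) != wval w (rshift n b)) -> linext wpp_mul w.
Proof.
move=> /linextP[le1_P eq_P] /linextP[le1_Q eq_Q] disj.
apply/linextP; split=> x y; case: (split_ordP x) => a ->; case: (split_ordP y) => b ->;
  rewrite ?le1_of_preorder ?equivP_of_preorder ?cat_preorderE /= ?leq_add2l ?andbF ?andbT //.
- by rewrite -le1E => /le1_P; rewrite leq_u.
- by rewrite leqNgt ltn_addr.
- by rewrite -le1E => /le1_Q; rewrite leq_v.
- by move/eqP; rewrite -eq_u => /eqP/eq_P.
- by move=> eq_ab; have := disj a b; rewrite eq_ab eqxx.
- by move=> eq_ab; have := disj b a; rewrite eq_ab eqxx.
- by move/eqP; rewrite -eq_v => /eqP/eq_Q.
Qed.

Lemma linext_wpp_mul :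
  linext wpp_mul w = [&& linext P u, linext Q v &
                         all (fun x => x \notin drop n (wseq w)) (take n (wseq w))].
Proof.
rewrite disjoint_halvesE; apply/idP/and3P => [/linext_wpp_mul_halves[lin_u lin_v disj] |].
  by split=> //; apply/'forall_forallP.
by case=> lin_u lin_v /'forall_forallP; apply: linext_wpp_mul_of_halves.
Qed.

End LinextProduct.

End Product.

Section PhiMultiplicative.
Variables (K : fieldType) (n m : nat).
Local Open Scope ring_scope.

Lemma sum_shuf_coef (w : pw (n + m)) (u0 : pw n) (v0 : pw m) (G : pw n -> pw m -> K) :
  wseq u0 = pack (take n (wseq w)) -> wseq v0 = pack (drop n (wseq w)) ->
  \sum_(u : pw n) \sum_(v : pw m) G u v * (nat_of_bool (shuf_coef u v w))%:R =
  G u0 v0 * (nat_of_bool (all (fun x => x \notin drop n (wseq w)) (take n (wseq w))))%:R.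
Proof.
move=> u0_pack v0_pack; rewrite (bigD1 u0) //= [X in _ + X]big1 ?addr0 => [|u neq_u]; last first.
  apply: big1 => v _; rewrite /shuf_coef -u0_pack (inj_eq (@wseq_inj n)) (eq_sym u0) (negbTE neq_u).
  by rewrite mulr0.
rewrite (bigD1 v0) //= [X in _ + X]big1 ?addr0 => [|v neq_v]; last first.
  by rewrite /shuf_coef -v0_pack (inj_eq (@wseq_inj m)) (eq_sym v0) (negbTE neq_v) andbF mulr0.
by rewrite /shuf_coef u0_pack v0_pack !eqxx.
Qed.

Lemma sum_mulH (x : HW K n) (y : HW K m) (c : wpp (n + m) -> K) :
  \sum_R mulH x y R * c R = \sum_P \sum_Q x P * y Q * c (wpp_mul P Q).
Proof.
under eq_bigr => R _ do rewrite ffunE big_distrl /=; rewrite exchange_big /=.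
apply: eq_bigr => P _; under eq_bigr => R _ do rewrite big_distrl /=.
rewrite exchange_big /=; apply: eq_bigr => Q _.
rewrite (bigD1 (wpp_mul P Q)) ?mulH_coef_wpp_mul //= big1 ?addr0 ?mulr1 // => R neq_R.
case coefR: (mulH_coef P Q R); last by rewrite mulr0 mul0r.
by move: neq_R; rewrite (mulH_coef_uniq coefR (mulH_coef_wpp_mul P Q)) eqxx.
Qed.

Lemma phiK_mul (x : HW K n) (y : HW K m) : phiK (mulH x y) = mulW (phiK x) (phiK y).
Proof.
apply/ffunP => w; rewrite [RHS]ffunE.
have [u u_pack] := pack_pw (size_take_wseq w).
have [v v_pack] := pack_pw (size_drop_wseq w).
rewrite (sum_shuf_coef (fun u v => phiK x u * phiK y v) u_pack v_pack) !ffunE.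
rewrite sum_mulH -mulrA big_distrl /=; apply: eq_bigr => P _.
rewrite big_distrl mulr_sumr /=; apply: eq_bigr => Q _.
rewrite (linext_wpp_mul P Q u_pack v_pack).
by case: (linext P u); case: (linext Q v); case: (all _ _); rewrite ?mulr1 ?mulr0 ?mul0r.
Qed.

End PhiMultiplicative.

(** * Restrictions of a weak plane poset *)

Section Positions.
Variable n : nat.
Implicit Types T : {set 'I_n}.

Definition posn T (p : nat) := nth 0 (posl T) p.

Lemma posl_enum T : posl T = map val (enum T).
Proof.
rewrite /posl /enum_mem -filter_predI; congr (map _ _).
by apply: eq_filter => x; rewrite /= /in_mem /= andbT.
Qed.

Lemma size_posl T : size (posl T) = #|T|.
Proof. by rewrite posl_enum size_map cardE. Qed.

Lemma mem_posl T (x : 'I_n) : (val x \in posl T) = (x \in T).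
Proof. by rewrite posl_enum (mem_map val_inj) mem_enum. Qed.

Lemma sorted_posl T : sorted ltn (posl T).
Proof.
apply: (subseq_sorted ltn_trans (s2 := iota 0 n)); last exact: iota_ltn_sorted.
by rewrite -val_enum_ord map_subseq // filter_subseq.
Qed.

Lemma uniq_posl T : uniq (posl T).
Proof. exact: (sorted_uniq ltn_trans ltnn (sorted_posl T)). Qed.

Lemma posn_lt T p : p < #|T| -> posn T p < n.
Proof.
rewrite -size_posl /posn => /(mem_nth 0); rewrite posl_enum => /mapP[x _ ->].
exact: ltn_ord.
Qed.

Lemma posn_in T p (x : 'I_n) : p < #|T| -> posn T p = val x -> x \in T.
Proof. by move=> lt_p eq_x; rewrite -mem_posl -eq_x mem_nth ?size_posl. Qed.

Lemma posn_index T (x : 'I_n) : x \in T -> posn T (index (val x) (posl T)) = val x.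
Proof. by rewrite -mem_posl; apply: nth_index. Qed.

Lemma index_posn T p : p < #|T| -> index (posn T p) (posl T) = p.
Proof. by move=> lt_p; rewrite index_uniq ?size_posl ?uniq_posl. Qed.

Lemma index_posl_lt T (x : 'I_n) : x \in T -> index (val x) (posl T) < #|T|.
Proof. by rewrite -mem_posl -index_mem size_posl. Qed.

Lemma leq_posn T p q : p < #|T| -> q < #|T| -> (posn T p <= posn T q) = (p <= q).
Proof.
rewrite -size_posl => lt_p lt_q; have lt_posn := sorted_ltn_nth ltn_trans 0 (sorted_posl T).
case: (ltngtP p q) => [lt_pq | lt_qp | ->]; last by rewrite leqnn.
  exact/ltnW/lt_posn.
by apply/negbTE; rewrite -ltnNge lt_posn.
Qed.

Lemma posn_ltl T l (eq_l : #|T| = l) (p : 'I_l) : posn T p < n.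
Proof. by apply: posn_lt; rewrite eq_l. Qed.

Definition posn_ord T l (eq_l : #|T| = l) (p : 'I_l) : 'I_n := Ordinal (posn_ltl eq_l p).

Lemma posn_ord_in T l (eq_l : #|T| = l) (p : 'I_l) : posn_ord eq_l p \in T.
Proof. by apply: (posn_in (p := p)); rewrite ?eq_l. Qed.

Lemma relN_posn T l (eq_l : #|T| = l) (r : rel 'I_n) (p q : 'I_l) :
  relN r (posn T p) (posn T q) = r (posn_ord eq_l p) (posn_ord eq_l q).
Proof. exact: (relN_ord r (posn_ord eq_l p) (posn_ord eq_l q)). Qed.

End Positions.

Lemma filter_wseq n (w : pw n) (q : pred nat) :
  [seq y <- wseq w | q y] = [seq nth 0 (wseq w) p | p <- posl [set x | q (wval w x)]].
Proof.
rewrite {1}/wseq /rwseq filter_map /posl -map_comp.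
rewrite (@eq_filter _ _ [in [set x | q (wval w x)]]) => [|x]; last by rewrite /= inE.
by apply: eq_map => x /=; rewrite nth_wseq.
Qed.

Lemma pack_filter_wseq n (w : pw n) (q : pred nat) l (c : pw l) :
  let S := [set x | q (wval w x)] in
  (pack [seq y <- wseq w | q y] == wseq c) =
  (#|S| == l) && [forall p : 'I_l, forall r : 'I_l,
     (wval c p <= wval c r) == (nth 0 (wseq w) (posn S p) <= nth 0 (wseq w) (posn S r))].
Proof.
move=> S; rewrite filter_wseq; have [eq_l | neq_l] /= := eqVneq #|S| l.
  rewrite pack_eq_wseq; last by rewrite size_map size_posl.
  apply: eq_forallb => p; apply: eq_forallb => r.
  by rewrite !(nth_map 0) ?size_posl ?eq_l.
apply: contraNF neq_l => /eqP/(congr1 size).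
by rewrite size_pack size_map size_posl size_wseq => ->.
Qed.

Section Restriction.
Variables (n : nat) (P : wpp n).
Implicit Types T : {set 'I_n}.

Definition is_restr T l (A : wpp l) :=
  restr_match (le1 P) T (le1 A) && restr_match (le2 P) T (le2 A).

Lemma restr_total_preorder T l (eq_l : #|T| = l) :
  total_preorder (fun p q : 'I_l => relN (preceq P) (posn T p) (posn T q)).
Proof.
split=> [p | q p r | p q]; rewrite !(relN_posn eq_l).
- exact: preceq_refl.
- exact: preceq_trans.
- exact: preceq_total.
Qed.

Lemma is_restr_of_preorder T l (eq_l : #|T| = l) :
  is_restr T (wpp_of_preorder (restr_total_preorder eq_l)).
Proof.
have lt_l (p : 'I_l) : p < #|T| by rewrite eq_l.
apply/andP; split; apply/andP; split; rewrite ?eq_l //;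
  apply/'forall_'forall_eqP => p q; rewrite ?le1_of_preorder ?le2_of_preorder.
  by rewrite !(relN_posn eq_l) le1E /= leq_posn.
by rewrite !(relN_posn eq_l) le2E /= leq_posn.
Qed.

Lemma card_is_restr T l (A : wpp l) : is_restr T A -> #|T| = l.
Proof. by case/andP => /andP[/eqP]. Qed.

Lemma is_restr_uniq T l (A A' : wpp l) : is_restr T A -> is_restr T A' -> A = A'.
Proof.
case/andP=> /andP[_ /'forall_'forall_eqP le1A] /andP[_ /'forall_'forall_eqP le2A].
case/andP=> /andP[_ /'forall_'forall_eqP le1A'] /andP[_ /'forall_'forall_eqP le2A'].
by apply: wpp_preceq_inj => p q; rewrite /preceq le1A le2A le1A' le2A'.
Qed.

Lemma preceq_is_restr T l (A : wpp l) (p q : 'I_l) :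
  is_restr T A -> preceq A p q = relN (preceq P) (posn T p) (posn T q).
Proof.
move=> restrA; have eq_l := card_is_restr restrA.
by rewrite (is_restr_uniq restrA (is_restr_of_preorder eq_l)) preceq_of_preorder.
Qed.

Lemma le1_is_restr T l (A : wpp l) (p q : 'I_l) :
  is_restr T A -> le1 A p q = relN (le1 P) (posn T p) (posn T q).
Proof. by case/andP=> /andP[_ /'forall_'forall_eqP]. Qed.

Definition linext_on T l (c : pw l) :=
  [forall p : 'I_l, forall q : 'I_l,
    (relN (le1 P) (posn T p) (posn T q) ==> (wval c p <= wval c q)) &&
    ((wval c p == wval c q) ==> relN (preceq P) (posn T p) (posn T q)
                                && relN (preceq P) (posn T q) (posn T p))].

Lemma linext_is_restr T l (A : wpp l) (c : pw l) :
  is_restr T A -> linext A c = linext_on T c.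
Proof.
move=> restrA; apply/linextP/'forall_forallP => [[le1_mono eq_equiv] p q|lin_c].
  apply/andP; split; apply/implyP; first by rewrite -(le1_is_restr _ _ restrA); apply: le1_mono.
  by move/eqP/eq_equiv; rewrite /equivP !(preceq_is_restr _ _ restrA).
split=> p q; have /andP[/implyP le1_c /implyP eq_c] := lin_c p q.
  by rewrite (le1_is_restr _ _ restrA).
by move/eqP/eq_c; rewrite /equivP !(preceq_is_restr _ _ restrA).
Qed.

Lemma sum_is_restr T l (c : pw l) :
  \sum_(A : wpp l) is_restr T A * linext A c = (#|T| == l) * linext_on T c.
Proof.
have [eq_l | neq_l] := eqVneq #|T| l.
  have restrA := is_restr_of_preorder eq_l; set A := wpp_of_preorder _ in restrA.
  rewrite (bigD1 A) //= big1 ?addn0 ?restrA ?(linext_is_restr c restrA) // => B neq_BA.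
  by case restrB: (is_restr T B); rewrite // (is_restr_uniq restrB restrA) eqxx in neq_BA.
rewrite big1 // => B _; case restrB: (is_restr T B) => //.
by rewrite (card_is_restr restrB) eqxx in neq_l.
Qed.

End Restriction.

(** * φ is comultiplicative *)

Lemma card_set_sum (T : finType) (p : pred T) : #|[set x | p x]| = \sum_x p x.
Proof. by rewrite -sum1dep_card big_mkcond; apply: eq_bigr => x _; case: (p x). Qed.

Section CutsOfWpp.
Variables (n : nat) (P : wpp n) (i j : nat) (a : pw i) (b : pw j).

Definition admissible_cut (O : {set 'I_n}) :=
  [&& upclosed1 P O, #|~: O| == i, linext_on P (~: O) a, #|O| == j & linext_on P O b].

Lemma comulH_coefE (A : wpp i) (B : wpp j) :
  comulH_coef P A B = \sum_O upclosed1 P O * (is_restr P (~: O) A * is_restr P O B).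
Proof.
rewrite /comulH_coef card_set_sum; apply: eq_bigr => O _; rewrite /is_restr.
by case: (upclosed1 P O); do 4!case: (restr_match _ _ _).
Qed.

Lemma sum_comulH_coef :
  \sum_(AB : wpp i * wpp j) comulH_coef P AB.1 AB.2 * (linext AB.1 a * linext AB.2 b) =
  #|[set O | admissible_cut O]|.
Proof.
rewrite -(pair_bigA _ (fun A B => comulH_coef P A B * (linext A a * linext B b))) /=.
under eq_bigr => A _ do under eq_bigr => B _ do rewrite comulH_coefE big_distrl /=.
under eq_bigr => A _ do rewrite exchange_big /=.
rewrite exchange_big card_set_sum; apply: eq_bigr => O _.
transitivity (upclosed1 P O * ((\sum_A is_restr P (~: O) A * linext A a) *
                               (\sum_B is_restr P O B * linext B b))).
  rewrite big_distrl big_distrr /=; apply: eq_bigr => A _.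
  rewrite !big_distrr /=; apply: eq_bigr => B _.
  by rewrite -!mulnA; congr (_ * (_ * _)); apply: mulnCA.
rewrite !sum_is_restr /admissible_cut.
by case: (upclosed1 P O); case: (#|~: O| == i); case: (#|O| == j); do 2!case: (linext_on _ _ _).
Qed.

End CutsOfWpp.

Lemma count_iota_sum (p : pred nat) N L : N <= L ->
  count p (iota 0 N) = \sum_(k < L) ((k < N) && p k).
Proof.
move=> le_NL; have -> : iota 0 N = index_iota 0 N by rewrite /index_iota subn0.
rewrite -sum1_count big_mkcond /=.
rewrite big_mkord (big_ord_widen _ (fun k => if p k then 1 else 0) le_NL) big_mkcond /=.
by apply: eq_bigr => k _; case: (k < N); case: (p k).
Qed.

Section LettersAt.
Variables (n : nat) (P : wpp n).
Implicit Types T : {set 'I_n}.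

Definition letter_at l (c : pw l) (T : {set 'I_n}) (x : 'I_n) :=
  nth 0 (wseq c) (index (val x) (posl T)).

Lemma letter_at_posn T l (eq_l : #|T| = l) (c : pw l) (p : 'I_l) :
  letter_at c T (posn_ord eq_l p) = wval c p.
Proof. by rewrite /letter_at /= index_posn ?eq_l // nth_wseq. Qed.

Lemma letter_at_gt0 T l (c : pw l) x : #|T| = l -> x \in T -> 0 < letter_at c T x.
Proof.
move=> eq_l xT; have lt_x := index_posl_lt xT; rewrite eq_l in lt_x.
by have := wval_gt0 c (Ordinal lt_x); rewrite -nth_wseq.
Qed.

Lemma linext_on_letter_at T l (c : pw l) x y : #|T| = l -> linext_on P T c ->
  x \in T -> y \in T ->
  (le1 P x y -> letter_at c T x <= letter_at c T y) /\
  (letter_at c T x = letter_at c T y -> equivP P x y).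
Proof.
move=> eq_l /'forall_forallP lin_c xT yT.
have lt_x := index_posl_lt xT; have lt_y := index_posl_lt yT; rewrite eq_l in lt_x lt_y.
have /andP[/implyP le1_c /implyP eq_c] := lin_c (Ordinal lt_x) (Ordinal lt_y).
rewrite /= !posn_index // !relN_ord in le1_c eq_c.
rewrite /letter_at (nth_wseq c (Ordinal lt_x)) (nth_wseq c (Ordinal lt_y)).
by split=> // eq_xy; apply: eq_c; rewrite eq_xy.
Qed.

Lemma linext_on_pack T l (eq_l : #|T| = l) (c : pw l) (w : pw n) : linext P w ->
  (forall p r : 'I_l, (wval c p <= wval c r) =
     (nth 0 (wseq w) (posn T p) <= nth 0 (wseq w) (posn T r))) ->
  linext_on P T c.
Proof.
case/linextP=> le1_mono eq_equiv ord_c; apply/'forall_forallP => p r.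
have nth_posn (q : 'I_l) : nth 0 (wseq w) (posn T q) = wval w (posn_ord eq_l q).
  by rewrite -nth_wseq.
rewrite !(relN_posn eq_l); apply/andP; split; apply/implyP.
  by move/le1_mono; rewrite ord_c !nth_posn.
by rewrite eqn_leq !ord_c !nth_posn -eqn_leq => /eqP/eq_equiv/andP[-> ->].
Qed.

Lemma leq_letter_at_pack (w : pw n) (q : pred nat) l (c : pw l) (x y : 'I_n) :
  let S := [set z | q (wval w z)] in
  pack [seq z <- wseq w | q z] == wseq c -> q (wval w x) -> q (wval w y) ->
  (letter_at c S x <= letter_at c S y) = (wval w x <= wval w y).
Proof.
move=> S; rewrite pack_filter_wseq => /andP[/eqP eq_l /'forall_'forall_eqP ord_c] qx qy.
have xS : x \in S by rewrite inE.
have yS : y \in S by rewrite inE.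
have lt_x := index_posl_lt xS; have lt_y := index_posl_lt yS; rewrite eq_l in lt_x lt_y.
have := ord_c (Ordinal lt_x) (Ordinal lt_y); rewrite /= !posn_index // !nth_wseq => <-.
by rewrite /letter_at (nth_wseq c (Ordinal lt_x)) (nth_wseq c (Ordinal lt_y)).
Qed.

End LettersAt.

Section Deconcatenation.
Variables (n : nat) (P : wpp n) (i j : nat) (a : pw i) (b : pw j).
Implicit Types (O : {set 'I_n}) (w : pw n).

Definition deconc_at w k :=
  [&& linext P w, k <= maxw (wseq w),
      pack [seq x <- wseq w | x <= k] == wseq a & pack [seq x <- wseq w | k < x] == wseq b].

Definition cut_of w k := [set x | k < wval w x].

Lemma setC_cut_of w k : ~: cut_of w k = [set x | wval w x <= k].
Proof. by apply/setP => x; rewrite !inE -leqNgt. Qed.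

(* the letters of the word putting b on O above a on its complement *)
Definition cut_letter O x :=
  if x \in O then maxw (wseq a) + letter_at b O x else letter_at a (~: O) x.

Lemma cut_letter_out O x : x \notin O -> cut_letter O x <= maxw (wseq a).
Proof. by move/negbTE=> xO; rewrite /cut_letter xO nth_le_maxw. Qed.

Lemma cut_letter_in O x : #|O| = j -> x \in O -> maxw (wseq a) < cut_letter O x.
Proof. by move=> card_O xO; rewrite /cut_letter xO -addn1 leq_add2l letter_at_gt0. Qed.

Lemma leq_deconc_at w k x y : deconc_at w k ->
  (wval w x <= wval w y) = (cut_letter (cut_of w k) x <= cut_letter (cut_of w k) y).
Proof.
case/and4P=> _ _ pack_a pack_b.
have card_O : #|cut_of w k| = j by move: pack_b; rewrite pack_filter_wseq => /andP[/eqP].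
have cut_inE z : (z \in cut_of w k) = (k < wval w z) by rewrite inE.
have cut_outE z : (z \notin cut_of w k) = (wval w z <= k) by rewrite inE -leqNgt.
have below_cut x' y' : x' \notin cut_of w k -> y' \in cut_of w k ->
    (wval w x' < wval w y') && (cut_letter (cut_of w k) x' < cut_letter (cut_of w k) y').
  move=> x'O y'O; rewrite (leq_ltn_trans (cut_letter_out x'O) (cut_letter_in card_O y'O)).
  by rewrite cut_outE in x'O; rewrite cut_inE in y'O; rewrite (leq_ltn_trans x'O y'O).
have [xO | xO] := boolP (x \in cut_of w k); have [yO | yO] := boolP (y \in cut_of w k).
- by rewrite /cut_letter xO yO leq_add2l (leq_letter_at_pack pack_b) -?cut_inE.
- by case/andP: (below_cut y x yO xO) => lt_w lt_cut; rewrite leqNgt lt_w leqNgt lt_cut.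
- by case/andP: (below_cut x y xO yO) => /ltnW -> /ltnW ->.
by rewrite /cut_letter (negbTE xO) (negbTE yO) setC_cut_of (leq_letter_at_pack pack_a) -?cut_outE.
Qed.

Lemma admissible_deconc_at w k : deconc_at w k -> admissible_cut P a b (cut_of w k).
Proof.
case/and4P=> lin_w _; rewrite !pack_filter_wseq.
case/andP=> /eqP card_a /'forall_'forall_eqP ord_a /andP[/eqP card_b /'forall_'forall_eqP ord_b].
rewrite /admissible_cut setC_cut_of card_a card_b !eqxx /=; apply/and3P; split.
- apply/'forall_'forall_implyP => x y /andP[]; rewrite !inE => lt_kx le1xy.
  by case/linextP: lin_w => le1_mono _; apply: leq_trans lt_kx (le1_mono _ _ le1xy).
- by apply: (linext_on_pack card_a lin_w) => p r; rewrite ord_a.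
- by apply: (linext_on_pack card_b lin_w) => p r; rewrite ord_b.
Qed.

Lemma deconc_at_inj w w' k k' : deconc_at w k -> deconc_at w' k' ->
  cut_of w k = cut_of w' k' -> w = w' /\ k = k'.
Proof.
move=> dec_wk dec_wk' eq_cut.
have eq_w : w = w'.
  apply: pw_order_inj => x y.
  by rewrite (leq_deconc_at _ _ dec_wk) (leq_deconc_at _ _ dec_wk') eq_cut.
split=> //; subst w'.
have le_level k1 k2 : k2 <= maxw (wseq w) -> cut_of w k1 = cut_of w k2 -> k2 <= k1.
  move=> le_k2 eq_cut12; rewrite leqNgt; apply/negP => lt_k12.
  have [x eq_x] := wval_onto (leq_ltn_trans (leq0n k1) lt_k12) le_k2.
  by move/setP/(_ x): eq_cut12; rewrite !inE eq_x lt_k12 ltnn.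
case/and4P: dec_wk => _ le_k _ _; case/and4P: dec_wk' => _ le_k' _ _.
by apply/anti_leq; rewrite le_level // le_level.
Qed.

Section CutWord.
Variable O : {set 'I_n}.
Hypothesis adm_O : admissible_cut P a b O.

Let card_low : #|~: O| = i. Proof. by case/and5P: adm_O => _ /eqP. Qed.
Let card_high : #|O| = j. Proof. by case/and5P: adm_O => _ _ _ /eqP. Qed.

Definition cut_word := word_of_letters (cut_letter O).

Definition cut_level := \max_(x | x \notin O) wval cut_word x.

Lemma cut_word_low_high x y : x \notin O -> y \in O -> wval cut_word x < wval cut_word y.
Proof.
move=> xO yO; rewrite ltnNge leq_word_of_letters -ltnNge.
exact: leq_ltn_trans (cut_letter_out xO) (cut_letter_in card_high yO).
Qed.

Lemma cut_of_cut_word : cut_of cut_word cut_level = O.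
Proof.
apply/setP => x; rewrite inE; have [xO | xO] := boolP (x \in O).
  rewrite -(prednK (wval_gt0 cut_word x)) ltnS; apply/bigmax_leqP => y yO.
  by rewrite -ltnS prednK ?wval_gt0 ?cut_word_low_high.
by apply/negbTE; rewrite -leqNgt (leq_bigmax_cond (F := wval cut_word)).
Qed.

Lemma cut_level_le : cut_level <= maxw (wseq cut_word).
Proof. by apply/bigmax_leqP => y _; apply: wval_le_maxw. Qed.

Lemma cut_letter_low (p : 'I_i) : cut_letter O (posn_ord card_low p) = wval a p.
Proof.
have := posn_ord_in card_low p; rewrite inE => /negbTE xO.
by rewrite /cut_letter xO letter_at_posn.
Qed.

Lemma cut_letter_high (p : 'I_j) :
  cut_letter O (posn_ord card_high p) = maxw (wseq a) + wval b p.
Proof. by rewrite /cut_letter posn_ord_in letter_at_posn. Qed.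

Lemma pack_cut_word_low : pack [seq z <- wseq cut_word | z <= cut_level] == wseq a.
Proof.
rewrite pack_filter_wseq.
have -> : [set x | wval cut_word x <= cut_level] = ~: O by rewrite -setC_cut_of cut_of_cut_word.
rewrite card_low eqxx; apply/'forall_'forall_eqP => p r.
rewrite (nth_wseq _ (posn_ord card_low p)) (nth_wseq _ (posn_ord card_low r)).
by rewrite leq_word_of_letters !cut_letter_low.
Qed.

Lemma pack_cut_word_high : pack [seq z <- wseq cut_word | cut_level < z] == wseq b.
Proof.
rewrite pack_filter_wseq -/(cut_of _ _) cut_of_cut_word card_high eqxx.
apply/'forall_'forall_eqP => p r.
rewrite (nth_wseq _ (posn_ord card_high p)) (nth_wseq _ (posn_ord card_high r)).
by rewrite leq_word_of_letters !cut_letter_high leq_add2l.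
Qed.

Lemma linext_cut_word : linext P cut_word.
Proof.
case/and5P: adm_O => /'forall_'forall_implyP up_O _ lin_low _ lin_high.
have xO_low x : x \notin O -> x \in ~: O by rewrite inE.
apply/linextP; split=> x y.
  move=> le1xy; rewrite leq_word_of_letters.
  have [xO | xO] := boolP (x \in O).
    have yO : y \in O by apply: (up_O x); rewrite xO le1xy.
    rewrite /cut_letter xO yO leq_add2l.
    exact: (linext_on_letter_at card_high lin_high xO yO).1.
  have [yO | yO] := boolP (y \in O).
    exact/ltnW/(leq_ltn_trans (cut_letter_out xO) (cut_letter_in card_high yO)).
  rewrite /cut_letter (negbTE xO) (negbTE yO).
  exact: (linext_on_letter_at card_low lin_low (xO_low _ xO) (xO_low _ yO)).1.
move=> eq_w; have eq_cut : cut_letter O x = cut_letter O y.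
  by apply/eqP; rewrite eqn_leq -!(leq_word_of_letters (cut_letter O)) eq_w leqnn.
have [xO | xO] := boolP (x \in O); have [yO | yO] := boolP (y \in O).
- apply: (linext_on_letter_at card_high lin_high xO yO).2.
  by move: eq_cut; rewrite /cut_letter xO yO => /addnI.
- by have := cut_word_low_high yO xO; rewrite eq_w ltnn.
- by have := cut_word_low_high xO yO; rewrite eq_w ltnn.
apply: (linext_on_letter_at card_low lin_low (xO_low _ xO) (xO_low _ yO)).2.
by move: eq_cut; rewrite /cut_letter (negbTE xO) (negbTE yO).
Qed.

Lemma deconc_at_cut_word : deconc_at cut_word cut_level.
Proof.
by rewrite /deconc_at linext_cut_word cut_level_le pack_cut_word_low pack_cut_word_high.
Qed.

End CutWord.

Lemma linext_deconc_coef w :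
  linext P w * deconc_coef w a b = \sum_(k < n.+1) deconc_at w k.
Proof.
rewrite /deconc_coef (count_iota_sum _ (L := n.+1)) ?ltnS ?maxw_wseq_le //.
rewrite big_distrr /=; apply: eq_bigr => k _; rewrite /deconc_at ltnS.
by case: (linext P w); case: (k <= _); do 2!case: (_ == _).
Qed.

Lemma sum_linext_deconc_coef :
  \sum_w linext P w * deconc_coef w a b = #|[set O | admissible_cut P a b O]|.
Proof.
under eq_bigr => w _ do rewrite linext_deconc_coef.
rewrite pair_bigA /= -card_set_sum.
pose cut (wk : pw n * 'I_n.+1) := cut_of wk.1 wk.2.
have cut_inj : {in [set wk : pw n * 'I_n.+1 | deconc_at wk.1 wk.2] &, injective cut}.
  move=> [w k] [w' k']; rewrite !inE /= => dec dec' eq_cut.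
  by have [-> /val_inj ->] := deconc_at_inj dec dec' eq_cut.
rewrite -(card_in_imset cut_inj); apply: eq_card => O; rewrite inE.
apply/imsetP/idP => [[[w k]] | adm_O]; first by rewrite inE /= => /admissible_deconc_at adm ->.
have lt_level : cut_level O < n.+1 by rewrite ltnS (leq_trans (cut_level_le O)) ?maxw_wseq_le.
exists (cut_word O, Ordinal lt_level); first by rewrite inE deconc_at_cut_word.
by rewrite /cut /= cut_of_cut_word.
Qed.

End Deconcatenation.

Section PhiComultiplicative.
Variable K : fieldType.
Local Open Scope ring_scope.

Lemma phiK_comul n i j (x : HW K n) : phi2 (comulH i j x) = comulW i j (phiK x).
Proof.
apply/ffunP => -[a b]; rewrite !ffunE /=.
under eq_bigr => AB _ do rewrite ffunE big_distrl /=.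
rewrite exchange_big /=; under [RHS]eq_bigr => w _ do rewrite ffunE big_distrl /=.
rewrite [RHS]exchange_big /=; apply: eq_bigr => P _.
under eq_bigr => AB _ do rewrite -mulrA -natrM.
under [RHS]eq_bigr => w _ do rewrite -mulrA -natrM.
by rewrite -!mulr_sumr -!natr_sum sum_comulH_coef sum_linext_deconc_coef.
Qed.

End PhiComultiplicative.

Lemma wpp0_eq (P Q : wpp 0) : P = Q.
Proof. by apply: wpp_preceq_inj => -[]. Qed.

Lemma pw0_eq (u v : pw 0) : u = v.
Proof. by apply: pw_order_inj => -[]. Qed.

Lemma linext0 (P : wpp 0) (w : pw 0) : linext P w.
Proof. by apply/linextP; split=> -[]. Qed.

Section UnitCounit.
Variable K : fieldType.
Local Open Scope ring_scope.

Lemma phiK_unit : phiK (unitH K) = unitW K.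
Proof.
apply/ffunP => w; rewrite !ffunE (bigD1 (wpp_of_word w)) //= big1 => [|P neq_P].
  by rewrite ffunE linext0 mulr1 addr0.
by rewrite (wpp0_eq P (wpp_of_word w)) eqxx in neq_P.
Qed.

Lemma phiK_counit (x : HW K 0) : counitW (phiK x) = counitH x.
Proof.
rewrite /counitW /counitH; under eq_bigr => w _ do rewrite ffunE.
rewrite exchange_big /=; apply: eq_bigr => P _.
rewrite (bigD1 (word_of_wpp P)) //= big1 ?addr0 ?linext0 ?mulr1 // => w neq_w.
by rewrite (pw0_eq w (word_of_wpp P)) eqxx in neq_w.
Qed.

End UnitCounit.

Theorem mainTheorem5 (K : fieldType) :
  [/\ (* phi is bijective (on every homogeneous component) *)
      forall n, bijective (@phiK K n),
      (* phi is multiplicative and unital *)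
      forall n m (x : HW K n) (y : HW K m),
        phiK (mulH x y) = mulW (phiK x) (phiK y),
      phiK (unitH K) = unitW K,
      (* phi is comultiplicative *)
      forall n i j (x : HW K n),
        phi2 (comulH i j x) = comulW i j (phiK x) &
      (* phi is counital *)
      forall x : HW K 0, counitW (phiK x) = counitH x].
Proof.
split.
- exact: phiK_bij.
- exact: phiK_mul.
- exact: phiK_unit.
- exact: phiK_comul.
- exact: phiK_counit.
Qed.
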